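(* Fix $a\ge0$ and $0\le\alpha\le\beta$, and let $\rho(x)=1+x^2$. Then for every $f\in C_\rho^k[0,\infty)$, $$\lim_{n\to\infty}\left\|T_{n,a}^{\alpha,\beta}(f;\cdot)-f\right\|_\rho=\lim_{n\to\infty}\sup_{x\ge0}\frac{|T_{n,a}^{\alpha,\beta}(f;x)-f(x)|}{1+x^2}=0.$$
   Context: Fix $a\ge 0$ and real numbers $\alpha,\beta$ with $0\le\alpha\le\beta$. For $n\in\mathbb N=\{1,2,\dots\}$ let $(n)_0=1$, $(n)_i=n(n+1)\cdots(n+i-1)$, and $p_k(n,a)=\sum_{i=0}^{k}\binom{k}{i}(n)_i a^{k-i}$. For $x\ge0$ and $k=0,1,2,\dots$ put $W_{n,k}^a(x)=e^{-\frac{ax}{1+x}}\frac{p_k(n,a)}{k!}\frac{x^k}{(1+x)^{k+n}}$ (so that $\sum_{k\ge0}W_{n,k}^a(x)=1$). The generalized Baskakov–Kantorovich–Stancu operator is $T_{n,a}^{\alpha,\beta}(f;x)=(n+\beta)\sum_{k=0}^{\infty}W_{n,k}^a(x)\int_{\frac{k+\alpha}{n+\beta}}^{\frac{k+\alpha+1}{n+\beta}}f(t)\,dt$. With the weight $\rho(x)=1+x^2$: $B_\rho[0,\infty)$ is the set of functions $f$ on $[0,\infty)$ with $|f(x)|\le M_f\rho(x)$ for all $x\ge0$ and some constant $M_f$; $C_\rho[0,\infty)$ is the set of continuous functions in $B_\rho[0,\infty)$, normed by $\|f\|_\rho=\sup_{x\ge0}|f(x)|/\rho(x)$; and $C_\rho^k[0,\infty)$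 is the set of $f\in C_\rho[0,\infty)$ for which $\lim_{x\to\infty}f(x)/\rho(x)$ exists and is finite. *)

From Stdlib Require Import Reals Lra Lia Arith ClassicalEpsilon.
Open Scope R_scope.

Fixpoint rfact (y : R) (i : nat) : R :=
  match i with
  | O => 1
  | S j => rfact y j * (y + INR j)
  end.

Definition pk (k n : nat) (a : R) : R :=
  sum_f_R0 (fun i => C k i * rfact (INR n) i * a ^ (k - i)) k.

Definition W (n k : nat) (a x : R) : R :=
  exp (- (a * x / (1 + x))) * (pk k n a / INR (fact k))
  * (x ^ k / (1 + x) ^ (k + n)).

(* Riemann integral of f over [lo,hi], defined when f is Riemann integrable
   there (value independent of the integrability proof, RiemannInt_P5);
   an unspecified real otherwise. *)
Definition Rint (f : R -> R) (lo hi : R) : R :=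
  epsilon (inhabits 0)
    (fun I => exists pr : Riemann_integrable f lo hi, RiemannInt pr = I).

Definition Tterm (a alpha beta : R) (f : R -> R) (n : nat) (x : R) (k : nat) : R :=
  (INR n + beta) * W n k a x *
  Rint f ((INR k + alpha) / (INR n + beta)) ((INR k + alpha + 1) / (INR n + beta)).

Definition T (a alpha beta : R) (f : R -> R) (n : nat) (x : R) : R :=
  epsilon (inhabits 0) (fun s => infinite_sum (Tterm a alpha beta f n x) s).

Definition rho (x : R) : R := 1 + x ^ 2.

Definition in_B_rho (f : R -> R) : Prop :=
  exists M : R, forall x, 0 <= x -> Rabs (f x) <= M * rho x.

Definition cont_on_nonneg (f : R -> R) : Prop :=
  forall x, 0 <= x -> limit1_in f (fun t => 0 <= t) (f x) x.

Definition in_C_rho_k (f : R -> R) : Prop :=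
  cont_on_nonneg f /\ in_B_rho f /\
  exists L : R, forall eps, eps > 0 -> exists A : R, forall x, A <= x ->
    Rabs (f x / rho x - L) < eps.

(* Write [f = L rho + G] with [L] the limit of [f / rho], so that [G = o(rho)] at infinity.
   Uniform continuity of [G] on compacts together with [G = o(rho)] gives
   [|G t - G x| <= eps rho x + K (t - x)^2] for all [t, x >= 0].  On each integration cell
   of [T], [f t - f x] is therefore squeezed between two quadratics in the left endpoint
   [(k + alpha) / (n + beta)] of the cell, up to [eps rho x].  The Baskakov weights are the
   coefficients of the generating function [exp (a s) / (1 - s)^n], [s = x / (1 + x)], which
   makes their first two moments explicit; averaging the quadratics against the weights,
   the moments of the cell endpoints about [x] are [O(rho x / n)], whence
   [|T f x - f x| <= eps rho x + C rho x / n]. *)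

From Stdlib Require Import Reals Lra Lia Psatz ClassicalEpsilon.
From Coquelicot Require Import Coquelicot.
Open Scope R_scope.

(** * Generating functions of the Baskakov weights *)

(* Coquelicot's series lemmas live in an abstract normed module and do not
   unify directly with [+] and [*] on [R]. *)
Lemma is_series_plusR (u v : nat -> R) (lu lv : R) :
  is_series u lu -> is_series v lv -> is_series (fun k => u k + v k) (lu + lv).
Proof. intros Hu Hv. exact (is_series_plus _ _ _ _ Hu Hv). Qed.

Lemma is_series_scalR (c : R) (u : nat -> R) (l : R) :
  is_series u l -> is_series (fun k => c * u k) (c * l).
Proof. intros Hu. exact (is_series_scal c _ _ Hu). Qed.

Lemma is_series_extR (u v : nat -> R) (l l' : R) :
  (forall k, u k = v k) -> l = l' -> is_series u l -> is_series v l'.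
Proof. intros Huv <- Hu. exact (is_series_ext _ _ _ Huv Hu). Qed.

Lemma is_series_zero : is_series (fun _ : nat => 0) 0.
Proof.
  eapply is_series_extR; [| | exact (is_series_scalR 0 _ _
    (is_series_geom (1/2) ltac:(rewrite Rabs_pos_eq; lra)))]; intros; simpl; ring.
Qed.

Lemma is_series_succ (u : nat -> R) (l l' : R) :
  u 0%nat + l' = l -> is_series (fun k => u (S k)) l' -> is_series u l.
Proof.
  intros Hl Hu. apply is_series_decr_1.
  eapply is_series_extR; [intros; reflexivity | | exact Hu].
  change (l' = l + - u 0%nat). lra.
Qed.

Lemma is_series_exp z : is_series (fun j => z ^ j / INR (Factorial.fact j)) (exp z).
Proof.
  eapply is_series_ext; [| exact (is_exp_Reals z)].
  intros j. cbv beta. rewrite pow_n_pow. reflexivity.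
Qed.

Lemma rfact_S y i : rfact y (S i) = y * rfact (y + 1) i.
Proof.
  induction i as [|i IH]; [simpl; ring |].
  change (rfact y (S (S i))) with (rfact y (S i) * (y + INR (S i))).
  rewrite IH. simpl rfact. rewrite S_INR. ring.
Qed.

Lemma rfact_ge0 y i : 0 <= y -> 0 <= rfact y i.
Proof.
  intros Hy. induction i as [|i IH]; simpl; [lra |].
  apply Rmult_le_pos; [exact IH | pose proof (pos_INR i); lra].
Qed.

(* [negbin_coef n i] is the coefficient of [s^i] in [(1 - s)^(-n)]. *)
Definition negbin_coef (n i : nat) : R := rfact (INR n) i / INR (Factorial.fact i).
Definition exp_coef (a : R) (j : nat) : R := a ^ j / INR (Factorial.fact j).
Definition pk_coef (a : R) (n k : nat) : R := pk k n a / INR (Factorial.fact k).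

Lemma negbin_coef_ge0 n i : 0 <= negbin_coef n i.
Proof.
  apply Rdiv_le_0_compat; [apply rfact_ge0, pos_INR | apply INR_fact_lt_0].
Qed.

Lemma negbin_coef_0 n : negbin_coef n 0 = 1.
Proof. unfold negbin_coef. simpl. field. Qed.

Lemma negbin_coef_0_S i : negbin_coef 0 (S i) = 0.
Proof. unfold negbin_coef. rewrite rfact_S. simpl. unfold Rdiv. ring. Qed.

Lemma negbin_coef_shift n i :
  INR (S i) * negbin_coef n (S i) = INR n * negbin_coef (S n) i.
Proof.
  unfold negbin_coef. rewrite rfact_S, (S_INR n), fact_simpl, mult_INR.
  field. split; [apply INR_fact_neq_0 | apply not_0_INR; lia].
Qed.

Lemma negbin_coef_pascal n i :
  negbin_coef (S n) (S i) = negbin_coef (S n) i + negbin_coef n (S i).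
Proof.
  unfold negbin_coef. rewrite (rfact_S (INR n)), (S_INR n).
  change (rfact (INR n + 1) (S i)) with (rfact (INR n + 1) i * (INR n + 1 + INR i)).
  rewrite fact_simpl, mult_INR, S_INR.
  pose proof (INR_fact_neq_0 i). pose proof (pos_INR i).
  field. lra.
Qed.

Lemma negbin_coef_partial_sum n i :
  negbin_coef (S n) i = sum_f_R0 (negbin_coef n) i.
Proof.
  induction i as [|i IH]; simpl; [rewrite !negbin_coef_0; reflexivity |].
  rewrite <- IH. apply negbin_coef_pascal.
Qed.

Lemma pow_mul_pow_sub (s : R) k i : (k <= i)%nat -> s ^ k * s ^ (i - k) = s ^ i.
Proof. intros H. rewrite <- pow_add. f_equal. lia. Qed.

(* Induction on [n]: multiplying by [1/(1 - s)] takes partial sums of coefficients. *)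
Lemma is_series_negbin n s : 0 <= s < 1 ->
  is_series (fun i => negbin_coef n i * s ^ i) (/ (1 - s) ^ n).
Proof.
  intros Hs. induction n as [|n IH].
  - apply (is_series_succ _ _ 0); [rewrite negbin_coef_0; simpl; field |].
    eapply is_series_extR; [| reflexivity | exact is_series_zero].
    intros i. rewrite negbin_coef_0_S. ring.
  - pose proof (is_series_geom s ltac:(rewrite Rabs_pos_eq; lra)) as Hgeom.
    eapply is_series_extR; [| | apply (is_series_mult_pos _ _ _ _ IH Hgeom)].
    + intros i. simpl. rewrite negbin_coef_partial_sum, (Rmult_comm _ (s ^ i)), scal_sum.
      apply sum_eq. intros k Hk. rewrite Rmult_assoc, pow_mul_pow_sub by lia. ring.
    + simpl. rewrite Rinv_mult. ring.
    + intros; apply Rmult_le_pos; [apply negbin_coef_ge0 | apply pow_le; lra].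
    + intros; apply pow_le; lra.
Qed.

Lemma exp_coef_ge0 a j : 0 <= a -> 0 <= exp_coef a j.
Proof. intros Ha. apply Rdiv_le_0_compat; [apply pow_le; lra | apply INR_fact_lt_0]. Qed.

Lemma exp_coef_shift a j : INR (S j) * exp_coef a (S j) = a * exp_coef a j.
Proof.
  unfold exp_coef. rewrite fact_simpl, mult_INR. simpl pow.
  pose proof (INR_fact_neq_0 j). assert (INR (S j) <> 0) by (apply not_0_INR; lia).
  field. auto.
Qed.

Lemma pk_coef_cauchy a n k :
  pk_coef a n k = sum_f_R0 (fun i => negbin_coef n i * exp_coef a (k - i)) k.
Proof.
  unfold pk_coef, pk. unfold Rdiv at 1. rewrite Rmult_comm, scal_sum. apply sum_eq.
  intros i Hi. unfold Binomial.C, negbin_coef, exp_coef.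
  pose proof (INR_fact_neq_0 i). pose proof (INR_fact_neq_0 (k - i)).
  pose proof (INR_fact_neq_0 k). field. auto.
Qed.

Lemma pk_coef_ge0 a n k : 0 <= a -> 0 <= pk_coef a n k.
Proof.
  intros Ha. rewrite pk_coef_cauchy. apply cond_pos_sum. intros i.
  apply Rmult_le_pos; [apply negbin_coef_ge0 | apply exp_coef_ge0, Ha].
Qed.

(* Coefficientwise form of
   [d/ds (exp (a s) / (1 - s)^n) = n exp (a s) / (1 - s)^(n+1) + a exp (a s) / (1 - s)^n]. *)
Lemma pk_coef_shift a n k :
  INR (S k) * pk_coef a n (S k) = INR n * pk_coef a (S n) k + a * pk_coef a n k.
Proof.
  rewrite !pk_coef_cauchy.
  transitivity (sum_f_R0 (fun i => (INR i * negbin_coef n i) * exp_coef a (S k - i)) (S k)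
    + sum_f_R0 (fun i => negbin_coef n i * (INR (S k - i) * exp_coef a (S k - i))) (S k)).
  { rewrite <- plus_sum, scal_sum. apply sum_eq. intros i Hi.
    rewrite minus_INR by lia. ring. }
  f_equal.
  - rewrite decomp_sum by lia. simpl pred. rewrite scal_sum.
    replace (INR 0 * negbin_coef n 0) with 0 by (simpl; ring).
    rewrite Rmult_0_l, Rplus_0_l. apply sum_eq. intros i Hi.
    rewrite negbin_coef_shift. replace (S k - S i)%nat with (k - i)%nat by lia. ring.
  - rewrite tech5, Nat.sub_diag. change (INR 0) with 0.
    rewrite Rmult_0_l, Rmult_0_r, Rplus_0_r, scal_sum. apply sum_eq. intros i Hi.
    replace (S k - i)%nat with (S (k - i)) by lia. rewrite exp_coef_shift. ring.
Qed.

Definition pk_gf (a s : R) (n : nat) : R := exp (a * s) / (1 - s) ^ n.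

(* [s] times the derivative of [pk_gf a s n] in [s]. *)
Definition pk_gf1 (a s : R) (n : nat) : R :=
  s * (INR n * pk_gf a s (S n) + a * pk_gf a s n).

Lemma is_series_pk_coef a n s : 0 <= a -> 0 <= s < 1 ->
  is_series (fun k => pk_coef a n k * s ^ k) (pk_gf a s n).
Proof.
  intros Ha Hs.
  assert (Hexp : is_series (fun j => exp_coef a j * s ^ j) (exp (a * s))).
  { eapply is_series_extR; [| reflexivity | apply is_series_exp]. intros j.
    unfold exp_coef. rewrite Rpow_mult_distr. unfold Rdiv. ring. }
  eapply is_series_extR; [| | apply (is_series_mult_pos _ _ _ _ (is_series_negbin n s Hs) Hexp)].
  - intros k. simpl. rewrite pk_coef_cauchy, (Rmult_comm _ (s ^ k)), scal_sum.
    apply sum_eq. intros i Hi. rewrite <- (pow_mul_pow_sub s i k Hi). ring.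
  - unfold pk_gf, Rdiv. apply Rmult_comm.
  - intros; apply Rmult_le_pos; [apply negbin_coef_ge0 | apply pow_le; lra].
  - intros; apply Rmult_le_pos; [apply exp_coef_ge0; lra | apply pow_le; lra].
Qed.

Lemma is_series_pk_coef_k a n s : 0 <= a -> 0 <= s < 1 ->
  is_series (fun k => INR k * pk_coef a n k * s ^ k) (pk_gf1 a s n).
Proof.
  intros Ha Hs.
  eapply is_series_succ; [| eapply is_series_extR; [| reflexivity |
    exact (is_series_scalR s _ _ (is_series_plusR _ _ _ _
      (is_series_scalR (INR n) _ _ (is_series_pk_coef a (S n) s Ha Hs))
      (is_series_scalR a _ _ (is_series_pk_coef a n s Ha Hs))))]].
  { unfold pk_gf1. simpl. ring. }
  intros k. simpl pow.
  replace (INR (S k) * pk_coef a n (S k) * (s * s ^ k))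
    with (s * s ^ k * (INR (S k) * pk_coef a n (S k))) by ring.
  rewrite pk_coef_shift. ring.
Qed.

Lemma is_series_pk_coef_k2 a n s : 0 <= a -> 0 <= s < 1 ->
  is_series (fun k => INR k ^ 2 * pk_coef a n k * s ^ k)
    (s * (INR n * (pk_gf1 a s (S n) + pk_gf a s (S n)) + a * (pk_gf1 a s n + pk_gf a s n))).
Proof.
  intros Ha Hs.
  eapply is_series_succ; [| eapply is_series_extR; [| reflexivity |
    exact (is_series_scalR s _ _ (is_series_plusR _ _ _ _
      (is_series_scalR (INR n) _ _ (is_series_plusR _ _ _ _
         (is_series_pk_coef_k a (S n) s Ha Hs) (is_series_pk_coef a (S n) s Ha Hs)))
      (is_series_scalR a _ _ (is_series_plusR _ _ _ _
         (is_series_pk_coef_k a n s Ha Hs) (is_series_pk_coef a n s Ha Hs)))))]].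
  { simpl. ring. }
  intros k. cbv beta.
  replace (INR (S k) ^ 2 * pk_coef a n (S k) * s ^ S k)
    with (s * s ^ k * INR (S k) * (INR (S k) * pk_coef a n (S k))) by (simpl; ring).
  rewrite pk_coef_shift, S_INR. ring.
Qed.

Lemma div_one_plus_range x : 0 <= x -> 0 <= x / (1 + x) < 1.
Proof.
  intros Hx. split; [apply Rdiv_le_0_compat; lra |].
  apply Rmult_lt_reg_r with (1 + x); [lra |].
  unfold Rdiv. rewrite Rmult_assoc, Rinv_l by lra. lra.
Qed.

Lemma W_eq_pk_coef a n k x : 0 <= x ->
  W n k a x = exp (- (a * (x / (1 + x)))) / (1 + x) ^ n * (pk_coef a n k * (x / (1 + x)) ^ k).
Proof.
  intros Hx. unfold W, pk_coef, Rdiv. rewrite Rpow_mult_distr, pow_add, pow_inv, Rinv_mult.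
  replace (a * x * / (1 + x)) with (a * (x * / (1 + x))) by ring. ring.
Qed.

Lemma W_ge0 a n k x : 0 <= a -> 0 <= x -> 0 <= W n k a x.
Proof.
  intros Ha Hx. rewrite W_eq_pk_coef by exact Hx. apply Rmult_le_pos.
  - apply Rdiv_le_0_compat; [left; apply exp_pos | apply pow_lt; lra].
  - apply Rmult_le_pos; [apply pk_coef_ge0, Ha |].
    apply pow_le, Rdiv_le_0_compat; lra.
Qed.

Lemma pk_gf_ratio a x m : 0 <= x ->
  pk_gf a (x / (1 + x)) m = exp (a * (x / (1 + x))) * (1 + x) ^ m.
Proof.
  intros Hx. unfold pk_gf. replace (1 - x / (1 + x)) with (/ (1 + x)) by (field; lra).
  rewrite pow_inv. unfold Rdiv. rewrite Rinv_inv. reflexivity.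
Qed.

(* [W n k a x = pk_coef a n k * s^k / pk_gf a s n] with [s = x / (1 + x)]. *)
Lemma is_series_W_of_pk_coef a n x (phi : nat -> R) (S : R) : 0 <= x ->
  is_series (fun k => phi k * pk_coef a n k * (x / (1 + x)) ^ k) S ->
  is_series (fun k => W n k a x * phi k) (S / pk_gf a (x / (1 + x)) n).
Proof.
  intros Hx HS.
  eapply is_series_extR;
    [| | exact (is_series_scalR (exp (- (a * (x / (1 + x)))) / (1 + x) ^ n) _ _ HS)].
  - intros k. rewrite W_eq_pk_coef by exact Hx. ring.
  - rewrite pk_gf_ratio, exp_Ropp by exact Hx. pose proof (exp_pos (a * (x / (1 + x)))).
    assert ((1 + x) ^ n <> 0) by (apply pow_nonzero; lra). field. split; lra.
Qed.

Definition W_mean (a : R) (n : nat) (x : R) : R := INR n * x + a * (x / (1 + x)).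
Definition W_msq (a : R) (n : nat) (x : R) : R :=
  INR n * (INR n + 1) * x ^ 2 + 2 * a * INR n * x * (x / (1 + x))
  + a ^ 2 * (x / (1 + x)) ^ 2 + INR n * x + a * (x / (1 + x)).

Lemma is_series_W a n x : 0 <= a -> 0 <= x -> is_series (fun k => W n k a x) 1.
Proof.
  intros Ha Hx. pose proof (div_one_plus_range x Hx) as Hs.
  eapply is_series_extR; [intros; apply Rmult_1_r | |
    eapply (is_series_W_of_pk_coef a n x (fun _ => 1) _ Hx)].
  2:{ eapply is_series_extR; [| reflexivity | exact (is_series_pk_coef a n _ Ha Hs)].
      intros; cbv beta; ring. }
  rewrite pk_gf_ratio by exact Hx. pose proof (exp_pos (a * (x / (1 + x)))).
  assert ((1 + x) ^ n <> 0) by (apply pow_nonzero; lra). field. split; lra.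
Qed.

Lemma is_series_W_k a n x : 0 <= a -> 0 <= x ->
  is_series (fun k => W n k a x * INR k) (W_mean a n x).
Proof.
  intros Ha Hx. pose proof (div_one_plus_range x Hx) as Hs.
  eapply is_series_extR; [intros; reflexivity | |
    exact (is_series_W_of_pk_coef a n x INR _ Hx (is_series_pk_coef_k a n _ Ha Hs))].
  unfold pk_gf1, W_mean. rewrite !pk_gf_ratio by exact Hx. simpl pow.
  pose proof (exp_pos (a * (x / (1 + x)))).
  assert ((1 + x) ^ n <> 0) by (apply pow_nonzero; lra). field. split; lra.
Qed.

Lemma is_series_W_k2 a n x : 0 <= a -> 0 <= x ->
  is_series (fun k => W n k a x * INR k ^ 2) (W_msq a n x).
Proof.
  intros Ha Hx. pose proof (div_one_plus_range x Hx) as Hs.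
  eapply is_series_extR; [intros; reflexivity | |
    exact (is_series_W_of_pk_coef a n x (fun k => INR k ^ 2) _ Hx
      (is_series_pk_coef_k2 a n _ Ha Hs))].
  unfold pk_gf1, W_msq. rewrite !pk_gf_ratio by exact Hx. simpl pow. rewrite S_INR.
  pose proof (exp_pos (a * (x / (1 + x)))).
  assert ((1 + x) ^ n <> 0) by (apply pow_nonzero; lra). field. split; lra.
Qed.

(** * Bracketing the operator [T] *)

Definition knot (alpha beta : R) (n k : nat) : R := (INR k + alpha) / (INR n + beta).
Definition knot_mean (a alpha beta : R) (n : nat) (x : R) : R :=
  (W_mean a n x + alpha) / (INR n + beta).
Definition knot_msq (a alpha beta : R) (n : nat) (x : R) : R :=
  (W_msq a n x + 2 * alpha * W_mean a n x + alpha ^ 2) / (INR n + beta) ^ 2.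

Lemma knot_ge0 alpha beta n k : 0 <= alpha -> 0 < INR n + beta -> 0 <= knot alpha beta n k.
Proof. intros Hal HN. apply Rdiv_le_0_compat; [pose proof (pos_INR k) |]; lra. Qed.

Lemma is_series_W_quadratic a alpha beta n x c0 c1 c2 :
  0 <= a -> 0 <= x -> INR n + beta <> 0 ->
  is_series (fun k => W n k a x * (c0 + c1 * knot alpha beta n k + c2 * knot alpha beta n k ^ 2))
    (c0 + c1 * knot_mean a alpha beta n x + c2 * knot_msq a alpha beta n x).
Proof.
  intros Ha Hx HN. unfold knot, knot_mean, knot_msq. set (N := INR n + beta) in *.
  eapply is_series_extR; [| | exact (is_series_plusR _ _ _ _ (is_series_plusR _ _ _ _
    (is_series_scalR (c0 + c1 * alpha / N + c2 * alpha ^ 2 / N ^ 2) _ _ (is_series_W a n x Ha Hx))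
    (is_series_scalR (c1 / N + 2 * c2 * alpha / N ^ 2) _ _ (is_series_W_k a n x Ha Hx)))
    (is_series_scalR (c2 / N ^ 2) _ _ (is_series_W_k2 a n x Ha Hx)))].
  - intros k. cbv beta. field. exact HN.
  - field. exact HN.
Qed.

Lemma continuity_pt_Rmax0 f : cont_on_nonneg f -> forall y, continuity_pt (fun t => f (Rmax 0 t)) y.
Proof.
  intros hf y e He. destruct (Rle_lt_dec 0 y) as [Hy | Hy].
  - destruct (hf y Hy e He) as [d [Hd Hfd]]. exists d. split; [exact Hd |].
    intros t [_ Ht]. simpl in *. unfold Rdist in *. rewrite (Rmax_right 0 y Hy).
    apply Hfd. simpl. unfold Rdist. split; [apply Rmax_l |].
    unfold Rmax. destruct (Rle_dec 0 t); [exact Ht |].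
    apply Rabs_def2 in Ht. apply Rabs_def1; lra.
  - exists (- y). split; [lra |]. intros t [_ Ht]. simpl in *. unfold Rdist in *.
    apply Rabs_def2 in Ht. rewrite (Rmax_left 0 t), (Rmax_left 0 y) by lra.
    rewrite Rminus_diag, Rabs_R0. exact He.
Qed.

Lemma Riemann_integrable_nonneg f lo hi :
  cont_on_nonneg f -> 0 <= lo <= hi -> Riemann_integrable f lo hi.
Proof.
  intros hf Hlh. apply (Riemann_integrable_ext (fun t => f (Rmax 0 t))).
  - intros t Ht. rewrite Rmin_left in Ht by lra. rewrite Rmax_right; [reflexivity | lra].
  - apply continuity_implies_RiemannInt; [lra |]. intros; apply continuity_pt_Rmax0, hf.
Qed.

Lemma Rint_RiemannInt f lo hi (pr : Riemann_integrable f lo hi) : Rint f lo hi = RiemannInt pr.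
Proof.
  unfold Rint.
  destruct (epsilon_spec (inhabits 0)
    (fun I => exists pr : Riemann_integrable f lo hi, RiemannInt pr = I)
    (ex_intro _ (RiemannInt pr) (ex_intro _ pr eq_refl))) as [pr' <-].
  apply RiemannInt_P5.
Qed.

Lemma Rint_bounds f lo hi c d : cont_on_nonneg f -> 0 <= lo <= hi ->
  (forall t, lo <= t <= hi -> c <= f t <= d) ->
  c * (hi - lo) <= Rint f lo hi <= d * (hi - lo).
Proof.
  intros hf Hlh Hcd. rewrite (Rint_RiemannInt _ _ _ (Riemann_integrable_nonneg f lo hi hf Hlh)).
  split.
  - rewrite <- (RiemannInt_P15 (RiemannInt_P14 lo hi c)).
    apply RiemannInt_P19; [lra |]. intros t Ht. apply Hcd; lra.
  - rewrite <- (RiemannInt_P15 (RiemannInt_P14 lo hi d)).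
    apply RiemannInt_P19; [lra |]. intros t Ht. apply Hcd; lra.
Qed.

Lemma is_series_between (t lo hi : nat -> R) (Llo Lhi : R) :
  (forall k, lo k <= t k <= hi k) -> is_series lo Llo -> is_series hi Lhi ->
  exists S, is_series t S /\ Llo <= S <= Lhi.
Proof.
  intros Hb Hlo Hhi.
  pose proof (is_series_minus _ _ _ _ Hhi Hlo : is_series (fun k => hi k - lo k) (Lhi - Llo)) as Hd.
  assert (Hex : ex_series (fun k => t k - lo k)).
  { apply (@ex_series_le R_AbsRing R_CompleteNormedModule _ (fun k => hi k - lo k));
      [| exists (Lhi - Llo); exact Hd].
    intros k. specialize (Hb k). change (Rabs (t k - lo k) <= hi k - lo k).
    rewrite Rabs_pos_eq; lra. }
  destruct Hex as [D HD]. exists (Llo + D). split.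
  - eapply is_series_extR; [| reflexivity | exact (is_series_plusR _ _ _ _ Hlo HD)].
    intros; cbv beta; ring.
  - assert (Series (fun k => t k - lo k) <= Series (fun k => hi k - lo k)).
    { apply Series_le; [intros k; specialize (Hb k); lra | exists (Lhi - Llo); exact Hd]. }
    assert (Series (fun _ => 0) <= Series (fun k => t k - lo k)).
    { apply Series_le; [intros k; specialize (Hb k); lra | exists D; exact HD]. }
    rewrite (is_series_unique _ _ HD), (is_series_unique _ _ Hd) in *.
    rewrite (is_series_unique _ _ is_series_zero) in *. lra.
Qed.

Lemma T_eq_of_is_series a alpha beta f n x S :
  is_series (Tterm a alpha beta f n x) S -> T a alpha beta f n x = S.
Proof.
  intros HS. apply is_series_Reals in HS. unfold T.
  apply (uniqueness_sum (Tterm a alpha beta f n x)); [| exact HS].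
  apply (epsilon_spec (inhabits 0) (fun s => infinite_sum (Tterm a alpha beta f n x) s)).
  exists S; exact HS.
Qed.

Lemma Tterm_bounds a alpha beta f n x k c d :
  0 <= a -> 0 <= alpha -> 0 < INR n + beta -> 0 <= x -> cont_on_nonneg f ->
  (forall t, knot alpha beta n k <= t <= knot alpha beta n k + / (INR n + beta) -> c <= f t <= d) ->
  W n k a x * c <= Tterm a alpha beta f n x k <= W n k a x * d.
Proof.
  intros Ha Hal HN Hx hf Hcd. unfold Tterm.
  assert (Hcell : (INR k + alpha + 1) / (INR n + beta) = knot alpha beta n k + / (INR n + beta))
    by (unfold knot; field; lra).
  rewrite Hcell. fold (knot alpha beta n k).
  pose proof (knot_ge0 alpha beta n k Hal HN) as Hu.
  assert (Hh : 0 < / (INR n + beta)) by (apply Rinv_0_lt_compat, HN).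
  destruct (Rint_bounds f (knot alpha beta n k) (knot alpha beta n k + / (INR n + beta)) c d hf
    ltac:(lra) Hcd) as [Hc Hd].
  replace (knot alpha beta n k + / (INR n + beta) - knot alpha beta n k)
    with (/ (INR n + beta)) in Hc, Hd by ring.
  pose proof (W_ge0 a n k x Ha Hx) as HW.
  assert (HNW : 0 <= (INR n + beta) * W n k a x) by (apply Rmult_le_pos; lra).
  apply (Rmult_le_compat_l _ _ _ HNW) in Hc, Hd.
  replace ((INR n + beta) * W n k a x * (c * / (INR n + beta))) with (W n k a x * c)
    in Hc by (field; lra).
  replace ((INR n + beta) * W n k a x * (d * / (INR n + beta))) with (W n k a x * d)
    in Hd by (field; lra).
  split; assumption.
Qed.

Lemma T_between_quadratics a alpha beta f n x c0 c1 c2 d0 d1 d2 :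
  0 <= a -> 0 <= alpha -> 0 < INR n + beta -> 0 <= x -> cont_on_nonneg f ->
  (forall k t, knot alpha beta n k <= t <= knot alpha beta n k + / (INR n + beta) ->
     c0 + c1 * knot alpha beta n k + c2 * knot alpha beta n k ^ 2 <= f t
     <= d0 + d1 * knot alpha beta n k + d2 * knot alpha beta n k ^ 2) ->
  c0 + c1 * knot_mean a alpha beta n x + c2 * knot_msq a alpha beta n x
  <= T a alpha beta f n x
  <= d0 + d1 * knot_mean a alpha beta n x + d2 * knot_msq a alpha beta n x.
Proof.
  intros Ha Hal HN Hx hf Hcd.
  destruct (is_series_between (Tterm a alpha beta f n x) _ _ _ _
    (fun k => Tterm_bounds a alpha beta f n x k _ _ Ha Hal HN Hx hf (Hcd k))
    (is_series_W_quadratic a alpha beta n x c0 c1 c2 Ha Hx ltac:(lra))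
    (is_series_W_quadratic a alpha beta n x d0 d1 d2 Ha Hx ltac:(lra))) as [S [HS HSb]].
  rewrite (T_eq_of_is_series _ _ _ _ _ _ _ HS). exact HSb.
Qed.

Lemma cell_sq_bounds u t h x : 0 <= u <= t -> t <= u + h ->
  0 <= t ^ 2 - u ^ 2 <= 2 * u * h + h ^ 2 /\ (t - x) ^ 2 <= 2 * (u - x) ^ 2 + 2 * h ^ 2.
Proof.
  intros Hut Hth. split; [split; nra |].
  pose proof (pow2_ge_0 ((u - x) - (t - u))). nra.
Qed.

(* The hypothesis controls [f t] by a quadratic in [t]; on a cell it is moved to a quadratic
   in the left endpoint, whose [W]-average only involves the first two knot moments. *)
Lemma T_sub_bound a alpha beta f n x L D K :
  0 <= a -> 0 <= alpha -> 0 < INR n + beta -> 0 <= x -> cont_on_nonneg f -> 0 <= K ->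
  (forall t, 0 <= t -> Rabs (f t - f x - L * (t ^ 2 - x ^ 2)) <= D + K * (t - x) ^ 2) ->
  Rabs (T a alpha beta f n x - f x)
  <= Rabs L * (Rabs (knot_msq a alpha beta n x - x ^ 2)
               + 2 * knot_mean a alpha beta n x / (INR n + beta) + / (INR n + beta) ^ 2)
     + D + 2 * K * (knot_msq a alpha beta n x - 2 * x * knot_mean a alpha beta n x + x ^ 2
                    + / (INR n + beta) ^ 2).
Proof.
  intros Ha Hal HN Hx hf HK Hdev.
  set (h := / (INR n + beta)). assert (Hh : 0 < h) by (apply Rinv_0_lt_compat, HN).
  replace (/ (INR n + beta) ^ 2) with (h ^ 2) by (unfold h; rewrite pow_inv; reflexivity).
  unfold Rdiv. fold h.
  set (m1 := knot_mean a alpha beta n x). set (m2 := knot_msq a alpha beta n x).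
  pose proof (Rabs_pos L) as HL0.
  destruct (T_between_quadratics a alpha beta f n x
    (f x - L * x ^ 2 - Rabs L * h ^ 2 - D - 2 * K * x ^ 2 - 2 * K * h ^ 2)
    (- 2 * Rabs L * h + 4 * K * x) (L - 2 * K)
    (f x - L * x ^ 2 + Rabs L * h ^ 2 + D + 2 * K * x ^ 2 + 2 * K * h ^ 2)
    (2 * Rabs L * h - 4 * K * x) (L + 2 * K) Ha Hal HN Hx hf) as [Hlo Hhi].
  { intros k t Ht. fold h in Ht. pose proof (knot_ge0 alpha beta n k Hal HN) as Hu.
    set (u := knot alpha beta n k) in *.
    destruct (cell_sq_bounds u t h x ltac:(lra) ltac:(lra)) as [Hsq Htx].
    assert (HLsq : Rabs (L * (t ^ 2 - u ^ 2)) <= Rabs L * (2 * u * h + h ^ 2)).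
    { rewrite Rabs_mult, (Rabs_pos_eq (t ^ 2 - u ^ 2)) by lra. apply Rmult_le_compat_l; lra. }
    pose proof (Rmult_le_compat_l K _ _ HK Htx).
    pose proof (Hdev t ltac:(lra)) as Hft.
    apply Rabs_le_between in HLsq. apply Rabs_le_between in Hft. split; lra. }
  fold m1 m2 in Hlo, Hhi.
  assert (HLm : Rabs (L * (m2 - x ^ 2)) <= Rabs L * Rabs (m2 - x ^ 2)) by (rewrite Rabs_mult; lra).
  apply Rabs_le_between in HLm. apply Rabs_le. split; lra.
Qed.

(** * Moments of the knots *)

Lemma div_sq_le_div P Z m N : 0 <= Z -> 1 <= m <= N -> P <= Z * m -> P / N ^ 2 <= Z / m.
Proof.
  intros HZ Hm HP. assert (HN2 : m ^ 2 <= N ^ 2) by nra.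
  destruct (Rle_lt_dec P 0) as [Hp | Hp].
  - assert (P / N ^ 2 <= 0).
    { unfold Rdiv. assert (0 < / N ^ 2) by (apply Rinv_0_lt_compat; nra). nra. }
    assert (0 <= Z / m) by (apply Rdiv_le_0_compat; lra). lra.
  - apply (Rmult_le_reg_r (N ^ 2 * m)); [nra |].
    replace (P / N ^ 2 * (N ^ 2 * m)) with (P * m) by (field; nra).
    replace (Z / m * (N ^ 2 * m)) with (Z * N ^ 2) by (field; lra).
    assert (P * m <= Z * m * m) by (apply Rmult_le_compat_r; lra). nra.
Qed.

Lemma abs_div_sq_le_div P Z m N : 0 <= Z -> 1 <= m <= N -> Rabs P <= Z * m ->
  Rabs (P / N ^ 2) <= Z / m.
Proof.
  intros HZ Hm HP. apply Rabs_le_between in HP. apply Rabs_le. split.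
  - pose proof (div_sq_le_div (- P) Z m N HZ Hm ltac:(lra)) as H.
    replace (- P / N ^ 2) with (- (P / N ^ 2)) in H by (field; nra). lra.
  - apply div_sq_le_div; lra.
Qed.

Lemma knot_msq_numerator_bound m x s a alpha beta :
  1 <= m -> 0 <= x -> 0 <= s <= 1 -> 0 <= a -> 0 <= alpha -> alpha <= beta ->
  Rabs (x ^ 2 * (m - 2 * m * beta - beta ^ 2) + m * x + a * s + 2 * a * m * x * s + a ^ 2 * s ^ 2
        + 2 * alpha * m * x + 2 * alpha * a * s + alpha ^ 2)
  <= (3 + 2 * beta + beta ^ 2 + 3 * a + 2 * alpha + a ^ 2 + 2 * alpha * a + alpha ^ 2)
     * (1 + x ^ 2) * m.
Proof.
  intros Hm Hx Hs Ha Hal Hab.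
  set (Y := m * x + a * s + 2 * a * m * x * s + a ^ 2 * s ^ 2
            + 2 * alpha * m * x + 2 * alpha * a * s + alpha ^ 2).
  assert (HY0 : 0 <= Y).
  { assert (0 <= a * m * x * s) by (apply Rmult_le_pos; [apply Rmult_le_pos |]; nra).
    assert (0 <= alpha * m * x) by (apply Rmult_le_pos; nra).
    assert (0 <= alpha * a * s) by (apply Rmult_le_pos; nra). unfold Y. nra. }
  assert (HY : Y <= m * ((1 + 2 * a + 2 * alpha) * x + (a + a ^ 2 + 2 * alpha * a + alpha ^ 2))).
  { assert (a * s <= m * a) by nra.
    assert (a * m * x * s <= m * a * x).
    { replace (a * m * x * s) with ((m * a * x) * s) by ring.
      assert (0 <= m * a * x) by (apply Rmult_le_pos; nra). nra. }
    assert (a ^ 2 * s ^ 2 <= m * a ^ 2) by (assert (s ^ 2 <= 1) by nra; nra).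
    assert (alpha * a * s <= m * alpha * a) by nra.
    assert (alpha ^ 2 <= m * alpha ^ 2) by nra. unfold Y. nra. }
  assert (Hquad : Rabs (x ^ 2 * (m - 2 * m * beta - beta ^ 2))
                  <= m * x ^ 2 * (1 + 2 * beta + beta ^ 2)).
  { rewrite Rabs_mult, (Rabs_pos_eq (x ^ 2)) by nra.
    assert (Rabs (m - 2 * m * beta - beta ^ 2) <= m * (1 + 2 * beta + beta ^ 2)).
    { assert (0 <= m * beta) by nra. assert (beta ^ 2 <= m * beta ^ 2) by nra.
      apply Rabs_le. split; nra. }
    nra. }
  assert (Hlin : m * ((1 + 2 * a + 2 * alpha) * x + (a + a ^ 2 + 2 * alpha * a + alpha ^ 2))
    <= m * ((1 + 2 * a + 2 * alpha) * (1 + x ^ 2)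
            + (a + a ^ 2 + 2 * alpha * a + alpha ^ 2) * (1 + x ^ 2))).
  { apply Rmult_le_compat_l; [lra |].
    assert (x <= 1 + x ^ 2) by nra. assert (0 <= a + a ^ 2 + 2 * alpha * a + alpha ^ 2) by nra.
    nra. }
  replace (x ^ 2 * (m - 2 * m * beta - beta ^ 2) + m * x + a * s + 2 * a * m * x * s + a ^ 2 * s ^ 2
           + 2 * alpha * m * x + 2 * alpha * a * s + alpha ^ 2)
    with (x ^ 2 * (m - 2 * m * beta - beta ^ 2) + Y) by (unfold Y; ring).
  eapply Rle_trans; [apply Rabs_triang |]. rewrite (Rabs_pos_eq Y HY0). nra.
Qed.

Section KnotMoments.

Variables (a alpha beta : R) (n : nat) (x : R).
Hypotheses (Ha : 0 <= a) (Hal : 0 <= alpha) (Hab : alpha <= beta) (Hn : (1 <= n)%nat) (Hx : 0 <= x).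

Lemma knot_msq_sub_sq_bound :
  Rabs (knot_msq a alpha beta n x - x ^ 2)
  <= (3 + 2 * beta + beta ^ 2 + 3 * a + 2 * alpha + a ^ 2 + 2 * alpha * a + alpha ^ 2)
     * rho x / INR n.
Proof.
  assert (HnR : 1 <= INR n) by (apply (le_INR 1); exact Hn).
  pose proof (div_one_plus_range x Hx) as Hs.
  set (s := x / (1 + x)) in *.
  replace (knot_msq a alpha beta n x - x ^ 2) with
    ((x ^ 2 * (INR n - 2 * INR n * beta - beta ^ 2) + INR n * x + a * s + 2 * a * INR n * x * s
      + a ^ 2 * s ^ 2 + 2 * alpha * INR n * x + 2 * alpha * a * s + alpha ^ 2) / (INR n + beta) ^ 2)
    by (unfold knot_msq, W_msq, W_mean; fold s; field; lra).
  apply abs_div_sq_le_div; [unfold rho; apply Rmult_le_pos; nra | lra |].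
  apply knot_msq_numerator_bound; lra.
Qed.

Lemma knot_spread_bound :
  2 * knot_mean a alpha beta n x / (INR n + beta) + / (INR n + beta) ^ 2
  <= (3 + 2 * a + 2 * alpha) * rho x / INR n.
Proof.
  assert (HnR : 1 <= INR n) by (apply (le_INR 1); exact Hn).
  pose proof (div_one_plus_range x Hx) as Hs.
  set (s := x / (1 + x)) in *.
  replace (2 * knot_mean a alpha beta n x / (INR n + beta) + / (INR n + beta) ^ 2)
    with ((2 * (INR n * x + a * s + alpha) + 1) / (INR n + beta) ^ 2)
    by (unfold knot_mean, W_mean; fold s; field; lra).
  apply div_sq_le_div; [unfold rho; apply Rmult_le_pos; nra | lra |].
  assert (a * s <= a) by nra.
  assert (2 * x <= 1 + x ^ 2) by (pose proof (pow2_ge_0 (x - 1)); nra).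
  assert (1 + 2 * a + 2 * alpha <= INR n * (1 + 2 * a + 2 * alpha)) by nra.
  assert (0 <= INR n * (2 + 2 * a + 2 * alpha) * x ^ 2) by (apply Rmult_le_pos; nra).
  unfold rho. nra.
Qed.

Lemma knot_central_msq_bound :
  knot_msq a alpha beta n x - 2 * x * knot_mean a alpha beta n x + x ^ 2 + / (INR n + beta) ^ 2
  <= (3 + beta ^ 2 + a + a ^ 2 + 2 * alpha * a + alpha ^ 2) * rho x / INR n.
Proof.
  assert (HnR : 1 <= INR n) by (apply (le_INR 1); exact Hn).
  pose proof (div_one_plus_range x Hx) as Hs.
  set (s := x / (1 + x)) in *.
  replace (knot_msq a alpha beta n x - 2 * x * knot_mean a alpha beta n x + x ^ 2
           + / (INR n + beta) ^ 2)
    with (((INR n + beta ^ 2) * x ^ 2 + INR n * x - 2 * beta * (a * s + alpha) * x + a ^ 2 * s ^ 2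
           + a * s + 2 * alpha * a * s + alpha ^ 2 + 1) / (INR n + beta) ^ 2)
    by (unfold knot_msq, knot_mean, W_msq, W_mean; fold s; field; lra).
  apply div_sq_le_div; [unfold rho; apply Rmult_le_pos; nra | lra |].
  assert (0 <= beta * (a * s + alpha) * x) by (apply Rmult_le_pos; [apply Rmult_le_pos |]; nra).
  assert (a * s <= a) by nra. assert (a ^ 2 * s ^ 2 <= a ^ 2) by (assert (s ^ 2 <= 1) by nra; nra).
  assert (alpha * a * s <= alpha * a) by nra.
  assert (beta ^ 2 * x ^ 2 <= INR n * beta ^ 2 * x ^ 2)
    by (assert (0 <= beta ^ 2 * x ^ 2) by nra; nra).
  assert (0 <= a ^ 2 + a + 2 * alpha * a + alpha ^ 2) by nra.
  assert (1 + a ^ 2 + a + 2 * alpha * a + alpha ^ 2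
          <= INR n * (1 + a ^ 2 + a + 2 * alpha * a + alpha ^ 2)) by nra.
  assert (INR n * x <= INR n * (1 + x ^ 2))
    by (apply Rmult_le_compat_l; [lra | pose proof (pow2_ge_0 (x - 1)); nra]).
  assert (0 <= INR n * (1 + a + a ^ 2 + 2 * alpha * a + alpha ^ 2) * x ^ 2)
    by (apply Rmult_le_pos; [apply Rmult_le_pos |]; nra).
  unfold rho. nra.
Qed.

End KnotMoments.

Lemma knot_moments_bound a alpha beta : 0 <= a -> 0 <= alpha -> alpha <= beta ->
  exists C, 0 <= C /\ forall n x, (1 <= n)%nat -> 0 <= x ->
    Rabs (knot_msq a alpha beta n x - x ^ 2)
      + 2 * knot_mean a alpha beta n x / (INR n + beta) + / (INR n + beta) ^ 2
      <= C * rho x / INR n /\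
    knot_msq a alpha beta n x - 2 * x * knot_mean a alpha beta n x + x ^ 2 + / (INR n + beta) ^ 2
      <= C * rho x / INR n.
Proof.
  intros Ha Hal Hab.
  set (c1 := 3 + 2 * beta + beta ^ 2 + 3 * a + 2 * alpha + a ^ 2 + 2 * alpha * a + alpha ^ 2).
  set (c2 := 3 + beta ^ 2 + a + a ^ 2 + 2 * alpha * a + alpha ^ 2).
  set (c3 := 3 + 2 * a + 2 * alpha).
  assert (Hc1 : 0 <= c1) by (unfold c1; nra). assert (Hc2 : 0 <= c2) by (unfold c2; nra).
  assert (Hc3 : 0 <= c3) by (unfold c3; nra).
  exists (c1 + c2 + c3). split; [lra |]. intros n x Hn Hx.
  assert (HnR : 1 <= INR n) by (apply (le_INR 1); exact Hn).
  assert (Hr : 0 <= rho x / INR n) by (unfold rho; apply Rdiv_le_0_compat; nra).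
  pose proof (knot_msq_sub_sq_bound a alpha beta n x Ha Hal Hab Hn Hx) as H1.
  pose proof (knot_spread_bound a alpha beta n x Ha Hal Hab Hn Hx) as H3.
  pose proof (knot_central_msq_bound a alpha beta n x Ha Hal Hab Hn Hx) as H2.
  fold c1 in H1. fold c2 in H2. fold c3 in H3. unfold Rdiv in *. split; nra.
Qed.

(** * A quadratic modulus of continuity *)

Lemma rho_ge1 x : 1 <= rho x.
Proof. unfold rho. nra. Qed.

Lemma rho_le_shift x t : rho t <= 2 * rho x + 2 * (t - x) ^ 2.
Proof. unfold rho. pose proof (pow2_ge_0 (t - 2 * x)). nra. Qed.

Section QuadraticModulus.

Variables (G : R -> R) (M : R).
Hypothesis HGM : forall t, 0 <= t -> Rabs (G t) <= M * rho t.

Lemma rho_bound_ge0 : 0 <= M.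
Proof.
  pose proof (HGM 0 (Rle_refl 0)) as H. pose proof (Rabs_pos (G 0)).
  unfold rho in H. simpl in H. lra.
Qed.

(* Far out, the smallness of [G / rho] beats the bound of [G] on [[0, A]]. *)
Lemma modulus_large_x A e : 0 < e -> (forall t, A <= t -> Rabs (G t) <= e * rho t) ->
  exists B, forall x t, B <= x -> 0 <= t ->
    Rabs (G t - G x) <= 3 * e * rho x + 2 * e * (t - x) ^ 2.
Proof.
  intros He HA. pose proof rho_bound_ge0 as HM.
  exists (Rmax A (M * (1 + A ^ 2) / e)). intros x t Hx Ht.
  pose proof (Rmax_l A (M * (1 + A ^ 2) / e)). pose proof (Rmax_r A (M * (1 + A ^ 2) / e)).
  assert (Hgx : Rabs (G x) <= e * rho x) by (apply HA; lra).
  assert (Hgt : Rabs (G t) <= 2 * e * rho x + 2 * e * (t - x) ^ 2).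
  { destruct (Rle_lt_dec A t) as [HAt | HtA].
    - pose proof (Rmult_le_compat_l e _ _ ltac:(lra) (rho_le_shift x t)).
      pose proof (HA t HAt). lra.
    - assert (HMt : M * rho t <= M * (1 + A ^ 2))
        by (apply Rmult_le_compat_l; [lra | unfold rho; nra]).
      assert (M * (1 + A ^ 2) <= e * x).
      { apply (Rmult_le_reg_r (/ e)); [apply Rinv_0_lt_compat, He |].
        replace (e * x * / e) with x by (field; lra). unfold Rdiv in *. lra. }
      assert (x <= rho x) by (unfold rho; nra).
      pose proof (HGM t Ht). pose proof (pow2_ge_0 (t - x)). nra. }
  unfold Rminus at 1. eapply Rle_trans; [apply Rabs_triang |]. rewrite Rabs_Ropp. lra.
Qed.

(* Near [x], uniform continuity on [[0, B + 1]]; away from [x], the growth bound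
   is absorbed by [(t - x)^2 / d^2 >= 1]. *)
Lemma modulus_small_x B e : 0 < e -> 0 <= B -> (forall y, continuity_pt G y) ->
  exists K, 0 <= K /\ forall x t, 0 <= x <= B -> 0 <= t ->
    Rabs (G t - G x) <= e + K * (t - x) ^ 2.
Proof.
  intros He HB HGc. pose proof rho_bound_ge0 as HM.
  destruct (@Heine_cor2 G 0 (B + 1) (fun y _ => HGc y) (mkposreal e He)) as [d0 Hd0]. simpl in Hd0.
  pose proof (Rmin_l d0 1). pose proof (Rmin_r d0 1).
  set (d := Rmin d0 1) in *.
  assert (Hd : 0 < d) by (apply Rmin_pos; [apply cond_pos | lra]).
  set (K0 := 3 * M * (1 + B ^ 2) / d ^ 2).
  assert (HK0 : 0 <= K0) by (apply Rdiv_le_0_compat; nra).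
  exists (K0 + 2 * M). split; [lra |]. intros x t Hx Ht.
  assert (HKt : 0 <= (K0 + 2 * M) * (t - x) ^ 2) by (apply Rmult_le_pos; [lra | apply pow2_ge_0]).
  destruct (Rlt_le_dec (Rabs (t - x)) d) as [Hnear | Hfar].
  - apply Rabs_def2 in Hnear.
    pose proof (Hd0 t x ltac:(lra) ltac:(lra) ltac:(apply Rabs_def1; lra)). lra.
  - assert (Hsq : d ^ 2 <= (t - x) ^ 2).
    { rewrite <- (Rabs_pos_eq d) in Hfar by lra. rewrite <- !Rsqr_pow2. apply Rsqr_le_abs_1, Hfar. }
    assert (Hgrowth : Rabs (G t - G x) <= 3 * M * (1 + B ^ 2) + 2 * M * (t - x) ^ 2).
    { unfold Rminus at 1. eapply Rle_trans; [apply Rabs_triang |]. rewrite Rabs_Ropp.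
      pose proof (Rmult_le_compat_l M _ _ HM (rho_le_shift x t)).
      assert (M * rho x <= M * (1 + B ^ 2)) by (apply Rmult_le_compat_l; [lra | unfold rho; nra]).
      pose proof (HGM t Ht). pose proof (HGM x ltac:(lra)). lra. }
    assert (3 * M * (1 + B ^ 2) <= K0 * (t - x) ^ 2).
    { unfold K0. replace (3 * M * (1 + B ^ 2) / d ^ 2 * (t - x) ^ 2)
        with (3 * M * (1 + B ^ 2) * ((t - x) ^ 2 / d ^ 2)) by (field; lra).
      assert (1 <= (t - x) ^ 2 / d ^ 2).
      { apply (Rmult_le_reg_r (d ^ 2)); [nra |]. unfold Rdiv.
        rewrite Rmult_assoc, Rinv_l, Rmult_1_r by nra. lra. }
      assert (0 <= 3 * M * (1 + B ^ 2)) by nra. nra. }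
    nra.
Qed.

Lemma quadratic_modulus : (forall y, continuity_pt G y) ->
  (forall e, 0 < e -> exists A, forall t, A <= t -> Rabs (G t) <= e * rho t) ->
  forall e, 0 < e -> exists K, 0 <= K /\ forall x t, 0 <= x -> 0 <= t ->
    Rabs (G t - G x) <= e * rho x + K * (t - x) ^ 2.
Proof.
  intros HGc Hsmall e He.
  destruct (Hsmall (e / 3) ltac:(lra)) as [A HA].
  destruct (modulus_large_x A (e / 3) ltac:(lra) HA) as [B HB].
  destruct (modulus_small_x (Rmax B 0) (e / 3) ltac:(lra) (Rmax_r B 0) HGc) as [K [HK HKx]].
  exists (K + 2 * (e / 3)). split; [lra |]. intros x t Hx Ht.
  pose proof (rho_ge1 x). pose proof (pow2_ge_0 (t - x)).
  destruct (Rle_lt_dec B x) as [HBx | HxB].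
  - pose proof (HB x t HBx Ht). nra.
  - pose proof (HKx x t ltac:(pose proof (Rmax_l B 0); lra) Ht). nra.
Qed.

End QuadraticModulus.

(* Composing with [Rmax 0] extends [f] continuously to all of [R], as [Heine_cor2] needs. *)
Lemma C_rho_k_remainder f : in_C_rho_k f ->
  exists L M, let G := fun t => f (Rmax 0 t) - L * rho t in
    (forall y, continuity_pt G y) /\ (forall t, 0 <= t -> Rabs (G t) <= M * rho t) /\
    (forall e, 0 < e -> exists A, forall t, A <= t -> Rabs (G t) <= e * rho t).
Proof.
  intros [hc [[M hM] [L hL]]]. exists L, (M + Rabs L). intros G.
  assert (HG : forall t, 0 <= t -> G t = (f t / rho t - L) * rho t).
  { intros t Ht. unfold G. rewrite Rmax_right by exact Ht.
    pose proof (rho_ge1 t). field. lra. }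
  split; [| split].
  - intros y. apply continuity_pt_minus; [apply continuity_pt_Rmax0, hc | unfold rho; reg].
  - intros t Ht. pose proof (rho_ge1 t). unfold G. rewrite Rmax_right by exact Ht.
    unfold Rminus. eapply Rle_trans; [apply Rabs_triang |].
    rewrite Rabs_Ropp, Rabs_mult, (Rabs_pos_eq (rho t)) by lra. pose proof (hM t Ht). lra.
  - intros e He. destruct (hL e He) as [A HA]. exists (Rmax A 0). intros t Ht.
    pose proof (Rmax_l A 0). pose proof (Rmax_r A 0). pose proof (rho_ge1 t).
    rewrite HG, Rabs_mult, (Rabs_pos_eq (rho t)) by lra.
    apply Rmult_le_compat_r; [lra |]. left. apply HA. lra.
Qed.

Lemma div_le_of_div_lt X e m : 0 <= X -> 0 < e -> X / e < m -> X / m <= e.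
Proof.
  intros HX He H. assert (Hm : 0 < m) by (pose proof (Rdiv_le_0_compat X e HX He); lra).
  apply (Rmult_le_reg_r m); [exact Hm |]. replace (X / m * m) with X by (field; lra).
  apply (Rmult_lt_compat_r e) in H; [| exact He].
  replace (X / e * e) with X in H by (field; lra). lra.
Qed.

Lemma T_sub_le_rate a alpha beta f n x L K C e :
  0 <= a -> 0 <= alpha -> alpha <= beta -> (1 <= n)%nat -> 0 <= x -> cont_on_nonneg f -> 0 <= K ->
  Rabs (knot_msq a alpha beta n x - x ^ 2)
    + 2 * knot_mean a alpha beta n x / (INR n + beta) + / (INR n + beta) ^ 2
    <= C * rho x / INR n ->
  knot_msq a alpha beta n x - 2 * x * knot_mean a alpha beta n x + x ^ 2 + / (INR n + beta) ^ 2
    <= C * rho x / INR n ->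
  (forall t, 0 <= t -> Rabs (f t - f x - L * (t ^ 2 - x ^ 2)) <= e * rho x + K * (t - x) ^ 2) ->
  Rabs (T a alpha beta f n x - f x) <= e * rho x + (Rabs L + 2 * K) * C * rho x / INR n.
Proof.
  intros Ha Hal Hab Hn Hx hf HK Hm1 Hm2 Hmod.
  assert (HnR : 1 <= INR n) by (apply (le_INR 1); exact Hn).
  eapply Rle_trans;
    [exact (T_sub_bound a alpha beta f n x L _ K Ha Hal ltac:(lra) Hx hf HK Hmod) |].
  replace ((Rabs L + 2 * K) * C * rho x / INR n)
    with (Rabs L * (C * rho x / INR n) + 2 * K * (C * rho x / INR n)) by (field; lra).
  pose proof (Rmult_le_compat_l _ _ _ (Rabs_pos L) Hm1).
  pose proof (Rmult_le_compat_l (2 * K) _ _ ltac:(lra) Hm2). lra.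
Qed.

Theorem theorem4p1 (a alpha beta : R)
  (ha : 0 <= a) (halpha : 0 <= alpha) (hab : alpha <= beta)
  (f : R -> R) (hf : in_C_rho_k f) :
  forall eps : R, eps > 0 ->
    exists N : nat, forall n : nat, (1 <= n)%nat -> (N <= n)%nat ->
      forall x : R, 0 <= x ->
        Rabs (T a alpha beta f n x - f x) / rho x <= eps.
Proof.
  intros eps Heps.
  destruct (C_rho_k_remainder f hf) as [L [M [HGc [HGM HGsmall]]]].
  destruct (quadratic_modulus _ M HGM HGc HGsmall (eps / 2) ltac:(lra)) as [K [HK Hmod]].
  destruct (knot_moments_bound a alpha beta ha halpha hab) as [C [HC Hmom]].
  destruct (INR_unbounded ((Rabs L + 2 * K) * C / (eps / 2))) as [N HN].
  exists N. intros n Hn HNn x Hx.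
  assert (Hrate : (Rabs L + 2 * K) * C / INR n <= eps / 2).
  { apply div_le_of_div_lt; [pose proof (Rabs_pos L); nra | lra |].
    pose proof (le_INR N n HNn). lra. }
  destruct (Hmom n x Hn Hx) as [Hm1 Hm2].
  assert (Hdev : Rabs (T a alpha beta f n x - f x)
                 <= eps / 2 * rho x + (Rabs L + 2 * K) * C * rho x / INR n).
  { apply (T_sub_le_rate a alpha beta f n x L K C); auto; [exact (proj1 hf) |].
    intros t Ht. pose proof (Hmod x t Hx Ht) as Hxt. cbv beta in Hxt.
    rewrite !Rmax_right in Hxt by lra. unfold rho in Hxt.
    replace (f t - f x - L * (t ^ 2 - x ^ 2))
      with (f t - L * (1 + t ^ 2) - (f x - L * (1 + x ^ 2))) by ring. exact Hxt. }
  pose proof (rho_ge1 x). pose proof (Rmult_le_compat_r (rho x) _ _ ltac:(lra) Hrate).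
  apply (Rmult_le_reg_r (rho x)); [lra |].
  unfold Rdiv in *. rewrite Rmult_assoc, Rinv_l, Rmult_1_r by lra. nra.
Qed.
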